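(* Let $\gamma$ be a functorial. Then: (1) If $\gamma$ satisfies (F1) and (F2), then $\gamma(G_1\times G_2)=\gamma(G_1)\times\gamma(G_2)$ for all groups $G_1,G_2$. (2) If $\gamma$ satisfies (F2) and (F3), then $\mathrm{F}^*(G)\subseteq\gamma(G)$ for every group $G$. (3) If $\gamma$ satisfies (F4), then $\gamma(G)\le\tilde{\mathrm{F}}(G)$ for every group $G$. (4) $\gamma^\infty$ is idempotent, i.e. $\gamma^\infty(\gamma^\infty(G))=\gamma^\infty(G)$ for every group $G$.
   Context: All groups are finite. A functorial is a function $\theta$ assigning to each group $G$ a characteristic subgroup $\theta(G)$ such that $f(\theta(G))=\theta(f(G))$ for every isomorphism $f:G\to G^*$. Conditions (for every group $G$): (F1) $f(\gamma(G))\subseteq\gamma(f(G))$ for every epimorphism $f:G\to G^*$; (F2) $\gamma(N)\subseteq\gamma(G)$ for every $N\trianglelefteq G$; (F3) $C_G(\gamma(G))\subseteq\gamma(G)$; (F4) $\gamma(G)/\Phi(G)\subseteq\mathrm{Soc}(G/\Phi(G))$. $\mathrm{F}^*(G)$ is the generalized Fitting subgroup; $\tilde{\mathrm{F}}(G)$ is defined by $\Phi(G)\subseteq\tilde{\mathrm{F}}(G)$ and $\tilde{\mathrm{F}}(G)/\Phi(G)=\mathrm{Soc}(G/\Phi(G))$. $\gamma^{(1)}=\gamma$, $\gamma^{(i+1)}(G)=\gamma(\gamma^{(i)}(G))$, $\gamma^\infty(G)=\bigcap_{i\in\mathbb{N}}\gamma^{(i)}(G)$. *)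

From HB Require Import structures.
From mathcomp Require Import boolp.
From mathcomp Require Import all_boot all_fingroup all_solvable.
Set Implicit Arguments. Unset Strict Implicit. Unset Printing Implicit Defensive.
Local Open Scope group_scope.

Definition gobj := forall gT : finGroupType, {set gT} -> {set gT}.

Definition functorial (th : gobj) : Prop :=
  (forall (gT : finGroupType) (G : {group gT}),
      group_set (th gT G) /\ th gT G \char G) /\
  (forall (gT rT : finGroupType) (G : {group gT}) (f : {morphism G >-> rT}),
      'injm f -> f @* (th gT G) = th rT (f @* G)).

Definition condF1 (ga : gobj) : Prop :=
  forall (gT rT : finGroupType) (G : {group gT}) (f : {morphism G >-> rT}),
    f @* (ga gT G) \subset ga rT (f @* G).

Definition condF2 (ga : gobj) : Prop :=
  forall (gT : finGroupType) (G N : {group gT}), N <| G -> ga gT N \subset ga gT G.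

Definition condF3 (ga : gobj) : Prop :=
  forall (gT : finGroupType) (G : {group gT}), 'C_G(ga gT G) \subset ga gT G.

Definition socle (gT : finGroupType) (A : {set gT}) : {set gT} :=
  << \bigcup_(M : {group gT} | (M \subset A) && minnormal M A) M >>.

Definition condF4 (ga : gobj) : Prop :=
  forall (gT : finGroupType) (G : {group gT}),
    ga gT G / 'Phi(G) \subset socle (G / 'Phi(G)).

Definition Ftilde (gT : finGroupType) (G : {group gT}) : {set gT} :=
  coset 'Phi(G) @*^-1 socle (G / 'Phi(G)).

Definition quasisimple (gT : finGroupType) (H : {group gT}) : bool :=
  ([~: H, H] == H) && simple (H / 'Z(H)).

Definition layer (gT : finGroupType) (G : {set gT}) : {set gT} :=
  << \bigcup_(H : {group gT} | subnormal H G && quasisimple H) H >>.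

Definition Fstar (gT : finGroupType) (G : {set gT}) : {set gT} :=
  'F(G) <*> layer G.

Definition giter (ga : gobj) (i : nat) (gT : finGroupType) (A : {set gT}) : {set gT} :=
  iter i (ga gT) A.

Definition ginf (ga : gobj) (gT : finGroupType) (A : {set gT}) : {set gT} :=
  [set x | `[< forall i : nat, x \in giter ga i.+1 A >]].

From HB Require Import structures.
From mathcomp Require Import boolp.
From mathcomp Require Import all_boot all_fingroup all_solvable.
Set Implicit Arguments. Unset Strict Implicit. Unset Printing Implicit Defensive.
Local Open Scope group_scope.

(* (1) The factors G1 x 1 and 1 x G2 are normal in G1 x G2, so (F2) and invariance
   under the embeddings give one inclusion; (F1) for the two projections gives the
   other.
   (2) By (F3), gamma fixes every abelian group, and every H with H/Z(H) simple:
   Z(H) <= gamma(H) and gamma(H)Z(H)/Z(H) is trivial or all of H/Z(H).  By (F2),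
   gamma is monotone along subnormal series.  In the nilpotent group F(G) every
   cyclic subgroup is subnormal, so gamma fixes F(G); components are subnormal.
   (3) is (F4) pulled back along G -> G/Phi(G).
   (4) The chain gamma^(i)(G) is decreasing, hence stationary, so gamma^oo(G) is a
   fixed point of gamma. *)

Lemma iter_decreasing_fixpoint (T : finType) (F : {set T} -> {set T}) (A : {set T}) :
  (forall i, iter i.+1 F A \subset iter i F A) ->
  exists n, F (iter n F A) = iter n F A.
Proof.
move=> decF.
suff fixF : forall c k, #|iter k F A| <= c -> exists n, F (iter n F A) = iter n F A.
  exact: fixF #|A| 0 (leqnn _).
elim=> [|c IHc] k leFkc; have [|neqF] := eqVneq (F (iter k F A)) (iter k F A);
  try by exists k.
all: have ltF : #|iter k.+1 F A| < #|iter k F A|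
       by rewrite proper_card // properEneq neqF decF.
  by move: (leq_trans ltF leFkc).
exact: IHc k.+1 (leq_trans ltF leFkc).
Qed.

Section Functorial.

Variable ga : gobj.
Arguments ga : clear implicits.
Hypothesis ga_functorial : functorial ga.

Lemma ga_group_set (gT : finGroupType) (G : {group gT}) : group_set (ga gT G).
Proof. by case: (proj1 ga_functorial gT G). Qed.

Canonical ga_group (gT : finGroupType) (G : {group gT}) := Group (ga_group_set G).

Lemma ga_char (gT : finGroupType) (G : {group gT}) : ga gT G \char G.
Proof. by case: (proj1 ga_functorial gT G). Qed.

Lemma ga_sub (gT : finGroupType) (G : {group gT}) : ga gT G \subset G.
Proof. exact: char_sub (ga_char G). Qed.

Lemma ga_normal (gT : finGroupType) (G : {group gT}) : ga gT G <| G.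
Proof. exact: char_normal (ga_char G). Qed.

Lemma ga_injm (gT rT : finGroupType) (G : {group gT}) (f : {morphism G >-> rT}) :
  'injm f -> f @* ga gT G = ga rT (f @* G).
Proof. exact: (proj2 ga_functorial). Qed.

Hypotheses (gaF1 : condF1 ga) (gaF2 : condF2 ga) (gaF3 : condF3 ga) (gaF4 : condF4 ga).

Section Products.

Variables (gT1 gT2 : finGroupType) (G1 : {group gT1}) (G2 : {group gT2}).

Lemma ga_morphim_sub (rT : finGroupType) (f : {morphism [set: gT1 * gT2] >-> rT}) :
  f @* ga _ (setX G1 G2) \subset ga rT (f @* setX G1 G2).
Proof.
have := gaF1 (restrm (subsetT (setX G1 G2)) f).
by rewrite !morphim_restrm setIid (setIidPr (ga_sub _)).
Qed.

Lemma ga_setX_sub : ga _ (setX G1 G2) \subset setX (ga gT1 G1) (ga gT2 G2).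
Proof.
apply/subsetP=> [[x1 x2] Gx]; rewrite inE /=.
have /subsetP ga1 := ga_morphim_sub [morphism of fst].
have /subsetP ga2 := ga_morphim_sub [morphism of snd].
rewrite morphim_fstX in ga1; rewrite morphim_sndX in ga2.
by apply/andP; split; [apply: ga1 | apply: ga2]; apply: mem_morphim (in_setT _) Gx.
Qed.

Lemma ga_injm_normal_sub (gT : finGroupType) (H : {group gT})
    (f : {morphism [set: gT] >-> gT1 * gT2}) :
  'injm f -> f @* H <| setX G1 G2 -> f @* ga gT H \subset ga _ (setX G1 G2).
Proof.
move=> injf nsfH; have injfH : 'injm (restrm (subsetT H) f) by rewrite injm_restrm.
have := ga_injm injfH; rewrite !morphim_restrm setIid (setIidPr (ga_sub H)) => ->.
exact: gaF2.
Qed.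

Lemma setX_ga_sub : setX (ga gT1 G1) (ga gT2 G2) \subset ga _ (setX G1 G2).
Proof.
have [nsG1 nsG2] := dprod_normal2 (setX_dprod G1 G2).
rewrite -setX_prod mul_subG //.
  by rewrite -morphim_pairg1 ga_injm_normal_sub ?injm_pairg1 ?morphim_pairg1.
by rewrite -morphim_pair1g ga_injm_normal_sub ?injm_pair1g ?morphim_pair1g.
Qed.

Lemma ga_setX : ga _ (setX G1 G2) = setX (ga gT1 G1) (ga gT2 G2).
Proof. by apply/eqP; rewrite eqEsubset ga_setX_sub setX_ga_sub. Qed.

End Products.

Lemma ga_subnormal (gT : finGroupType) (H G : {group gT}) :
  H <|<| G -> ga gT H \subset ga gT G.
Proof.
case/subnormalP=> s; elim: s H => [|K s IHs] H /=; first by move=> _ ->.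
by case/andP=> nsHK Ks defG; apply: subset_trans (gaF2 nsHK) (IHs K Ks defG).
Qed.

Lemma ga_abelian (gT : finGroupType) (A : {group gT}) : abelian A -> ga gT A = A.
Proof.
move=> cAA; apply/eqP; rewrite eqEsubset ga_sub; apply: subset_trans (gaF3 A).
by rewrite subsetI subxx (subset_trans cAA) ?centS ?ga_sub.
Qed.

Lemma ga_nilpotent (gT : finGroupType) (X : {group gT}) : nilpotent X -> ga gT X = X.
Proof.
move=> nilX; apply/eqP; rewrite eqEsubset ga_sub; apply/subsetP=> x Xx.
have snxX : <[x]> <|<| X by rewrite nilpotent_subnormal ?cycle_subG.
by apply: (subsetP (ga_subnormal snxX)); rewrite ga_abelian ?cycle_abelian ?cycle_id.
Qed.

Lemma ga_simple_center_quotient (gT : finGroupType) (H : {group gT}) :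
  simple (H / 'Z(H)) -> ga gT H = H.
Proof.
case/simpleP=> _ simHZ.
have nsZH := center_normal H.
have sZgaH : 'Z(H) \subset ga gT H.
  by apply: subset_trans (gaF3 H); rewrite setIS ?centS ?ga_sub.
have [gaHZ1|gaHZH] := simHZ _ (quotient_normal 'Z(H) (ga_normal H)).
  have sgaHZ : ga gT H \subset 'Z(H).
    by rewrite -quotient_sub1 ?gaHZ1 // (subset_trans (ga_sub H)) ?normal_norm.
  apply/eqP; rewrite eqEsubset ga_sub; apply: subset_trans (gaF3 H).
  by rewrite subsetI subxx centsC (subset_trans sgaHZ) ?subsetIr.
exact: quotient_inj (normalS sZgaH (ga_sub H) nsZH) nsZH gaHZH.
Qed.

Lemma Fstar_sub_ga (gT : finGroupType) (G : {group gT}) : Fstar G \subset ga gT G.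
Proof.
rewrite join_subG; apply/andP; split.
  by rewrite -{1}(ga_nilpotent (Fitting_nil G)) gaF2 ?Fitting_normal.
rewrite gen_subG; apply/bigcupsP=> H /andP[snHG /andP[_ simHZ]].
by rewrite -{1}(ga_simple_center_quotient simHZ) ga_subnormal.
Qed.

Lemma ga_sub_Ftilde (gT : finGroupType) (G : {group gT}) : ga gT G \subset Ftilde G.
Proof.
by rewrite -sub_morphim_pre ?gaF4 // (subset_trans (ga_sub G)) ?normal_norm ?Phi_normal.
Qed.

Lemma iter_ga_group_set (gT : finGroupType) (G : {group gT}) i :
  group_set (iter i (ga gT) G).
Proof. by elim: i => [|i IHi]; [apply: groupP | apply: (ga_group_set (Group IHi))]. Qed.

Canonical iter_ga_group (gT : finGroupType) (G : {group gT}) i :=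
  Group (iter_ga_group_set G i).

Lemma iter_ga_sub_leq (gT : finGroupType) (G : {group gT}) i j :
  i <= j -> iter j (ga gT) G \subset iter i (ga gT) G.
Proof.
move/subnK<-; elim: (j - i) => [|k IHk] //.
by rewrite addSn iterS (subset_trans (ga_sub _) IHk).
Qed.

Lemma ga_ginf (gT : finGroupType) (G : {group gT}) : ga gT (ginf ga G) = ginf ga G.
Proof.
have [n fixn] := iter_decreasing_fixpoint (fun i => ga_sub (iter_ga_group G i)).
set K := iter n (ga gT) G in fixn.
have sKiter i : K \subset iter i (ga gT) G.
  by rewrite -(iter_fix i fixn) -iterD iter_ga_sub_leq ?leq_addr.
suff -> : ginf ga G = K by [].
apply/setP=> x; rewrite inE; apply/asboolP/idP => [/(_ n)|Kx i].
  by rewrite /giter iterS fixn.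
exact: subsetP (sKiter i.+1) x Kx.
Qed.

End Functorial.

Lemma ginf_id (ga : gobj) (gT : finGroupType) (K : {set gT}) :
  ga gT K = K -> ginf ga K = K.
Proof.
move=> fixK; have iterK i : giter ga i K = K by apply: iter_fix.
by apply/setP=> x; rewrite inE; apply/asboolP/idP => [/(_ 0)|Kx i]; rewrite iterK.
Qed.

Theorem proposition2 (ga : gobj) (Hfun : functorial ga) :
  (condF1 ga -> condF2 ga ->
     forall (gT1 gT2 : finGroupType) (G1 : {group gT1}) (G2 : {group gT2}),
       ga (gT1 * gT2)%type (setX G1 G2) = setX (ga gT1 G1) (ga gT2 G2)) /\
  (condF2 ga -> condF3 ga ->
     forall (gT : finGroupType) (G : {group gT}), Fstar G \subset ga gT G) /\
  (condF4 ga ->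
     forall (gT : finGroupType) (G : {group gT}), ga gT G \subset Ftilde G) /\
  (forall (gT : finGroupType) (G : {group gT}),
     ginf ga (ginf ga G) = ginf ga G).
Proof.
split; first by move=> F1 F2; apply: ga_setX.
split; first by move=> F2 F3; apply: Fstar_sub_ga.
split; first by move=> F4; apply: ga_sub_Ftilde.
by move=> gT G; rewrite ginf_id ?ga_ginf.
Qed.
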